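(* Let $F:\mathbb{R}^p\to\mathbb{R}^p$ be single-valued and $L$-Lipschitz continuous and $T:\mathbb{R}^p\rightrightarrows\mathbb{R}^p$ be maximally $3$-cyclically monotone, $\Phi:=F+T$, with $\mathrm{zer}\,\Phi\neq\emptyset$. Let $\tau>1$, $\eta>0$, and let $\{(x^k,y^k)\}$ be generated by the golden-ratio scheme: start from $x^0\in\mathrm{dom}\,\Phi$, set $y^{-1}:=x^0$, and for $k\ge0$ $$y^k:=\tfrac{\tau-1}{\tau}x^k+\tfrac1\tau y^{k-1},\qquad x^{k+1}:=J_{\eta T}(y^k-\eta Fx^k).$$ Then for any $x^\star\in\mathrm{zer}\,\Phi$, any $\gamma>0$ and every $k\ge1$, $$\begin{aligned}&\tau\|y^{k+1}-x^\star\|^2+(\tau-1)(\tau-\gamma)\|x^{k+1}-x^k\|^2\le\tau\|y^k-x^\star\|^2+\tfrac{(\tau-1)L^2\eta^2}{\gamma}\|x^k-x^{k-1}\|^2\\&\quad-\tfrac{(\tau-1)(1-\tau^2+\tau)}{\tau}\|x^{k+1}-y^k\|^2-\tau(\tau-1)\|x^k-y^k\|^2-2\eta(\tau-1)\langle Fx^k-Fx^\star,x^k-x^\star\rangle.\end{aligned}$$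
   Context: $J_{\eta T}:=(\mathbb{I}+\eta T)^{-1}$ is the resolvent of $\eta T$; $\mathrm{zer}\,\Phi:=\{x:0\in Fx+Tx\}$. $T$ is $3$-cyclically monotone if $\sum_{i=1}^3\langle u^i,x^i-x^{i+1}\rangle\ge0$ for all $(x^i,u^i)\in\mathrm{gra}\,T$ with $x^4=x^1$; maximally so if its graph is not properly contained in that of another $3$-cyclically monotone operator. $F$ is $L$-Lipschitz if $\|Fx-Fy\|\le L\|x-y\|$. The range $k\ge1$ is where $x^{k-1}$ is defined by the scheme. *)

From HB Require Import structures.
From mathcomp Require Import all_boot all_order all_algebra.
From mathcomp Require Import reals.
Set Implicit Arguments. Unset Strict Implicit. Unset Printing Implicit Defensive.
Import Order.TTheory GRing.Theory Num.Theory.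
Local Open Scope ring_scope.

Definition dotp {R : realType} {p : nat} (u v : 'rV[R]_p) : R :=
  \sum_(i < p) u 0 i * v 0 i.
Definition enorm {R : realType} {p : nat} (u : 'rV[R]_p) : R :=
  Num.sqrt (dotp u u).

(* A set-valued operator is represented by its graph: T x u  <->  u \in T x. *)
Definition setop (R : realType) (p : nat) := 'rV[R]_p -> 'rV[R]_p -> Prop.

Definition lipschitz {R : realType} {p : nat} (F : 'rV[R]_p -> 'rV[R]_p) (L : R) :=
  forall x y, enorm (F x - F y) <= L * enorm (x - y).

Definition cyc3_monotone {R : realType} {p : nat} (T : setop R p) :=
  forall x1 x2 x3 u1 u2 u3, T x1 u1 -> T x2 u2 -> T x3 u3 ->
    0 <= dotp u1 (x1 - x2) + dotp u2 (x2 - x3) + dotp u3 (x3 - x1).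

Definition max_cyc3_monotone {R : realType} {p : nat} (T : setop R p) :=
  cyc3_monotone T /\
  forall T' : setop R p, cyc3_monotone T' ->
    (forall x u, T x u -> T' x u) -> (forall x u, T' x u -> T x u).

(* x \in J_{eta T}(z) = (I + eta T)^{-1} z  <->  z \in x + eta T x. *)
Definition resolvent_rel {R : realType} {p : nat} (eta : R) (T : setop R p)
  (z x : 'rV[R]_p) : Prop :=
  exists u, T x u /\ z = x + eta *: u.

(* dom Phi = dom (F + T) = dom T, since F is single-valued everywhere defined. *)
Definition in_dom_Phi {R : realType} {p : nat} (F : 'rV[R]_p -> 'rV[R]_p)
  (T : setop R p) (x : 'rV[R]_p) : Prop := exists u, T x u.

Definition in_zer_Phi {R : realType} {p : nat} (F : 'rV[R]_p -> 'rV[R]_p)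
  (T : setop R p) (x : 'rV[R]_p) : Prop := exists u, T x u /\ F x + u = 0.

From HB Require Import structures.
From mathcomp Require Import all_boot all_order all_algebra.
From mathcomp Require Import reals ring lra.
Set Implicit Arguments. Unset Strict Implicit. Unset Printing Implicit Defensive.
Import Order.TTheory GRing.Theory Num.Theory.
Local Open Scope ring_scope.

(* Apply 3-cyclic monotonicity of T to the graph points
   (x^{k+1}, (y^k - x^{k+1})/eta - F x^k), (xstar, -F xstar) and
   (x^k, (y^{k-1} - x^k)/eta - F x^{k-1}) given by two consecutive resolvent
   steps: it bounds eta <F x^k - F xstar, x^k - xstar> by
   <y^k - x^{k+1}, x^{k+1} - xstar> + <y^{k-1} - x^k, x^k - x^{k+1}> plus the
   cross term eta <F x^k - F x^{k-1}, x^k - x^{k+1}>.  Young's inequality and the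
   Lipschitz bound control the cross term, and the two golden-ratio averaging
   steps express the remaining inner products exactly through the squared
   distances of the statement. *)

Ltac dotp_componentwise :=
  rewrite /dotp;
  do ? (rewrite mulr_sumr || rewrite -big_split /= || rewrite -sumrB /=);
  apply: eq_bigr => i _; rewrite !mxE.

Section InnerProduct.
Variables (R : realType) (p : nat).
Implicit Types (u v x : 'rV[R]_p) (F : 'rV[R]_p -> 'rV[R]_p).

Lemma dotp_ge0 u : 0 <= dotp u u.
Proof. by apply: sumr_ge0 => i _; rewrite -expr2 sqr_ge0. Qed.

Lemma sqr_enorm u : enorm u ^+ 2 = dotp u u.
Proof. by rewrite sqr_sqrtr // dotp_ge0. Qed.

Lemma dotpZl (a : R) u v : dotp (a *: u) v = a * dotp u v.
Proof. by rewrite /dotp mulr_sumr; apply: eq_bigr => i _; rewrite mxE mulrA. Qed.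

Lemma dotp_distC u v : dotp (u - v) (u - v) = dotp (v - u) (v - u).
Proof. by dotp_componentwise; ring. Qed.

Lemma dotp_young (e g : R) u v : 0 < g ->
  2 * e * dotp u v <= e ^+ 2 / g * dotp u u + g * dotp v v.
Proof.
move=> g_gt0; rewrite -subr_ge0.
have -> : e ^+ 2 / g * dotp u u + g * dotp v v - 2 * e * dotp u v
          = g^-1 * dotp (e *: u - g *: v) (e *: u - g *: v).
  by dotp_componentwise; field; rewrite gt_eqF.
by rewrite mulr_ge0 ?dotp_ge0 // invr_ge0 ltW.
Qed.

Lemma lipschitz_dotp F L x x' : lipschitz F L ->
  dotp (F x - F x') (F x - F x') <= L ^+ 2 * dotp (x - x') (x - x').
Proof.
move=> hL; have enorm_ge0 u : 0 <= enorm u by exact: sqrtr_ge0.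
by rewrite -!sqr_enorm -exprMn ler_sqr ?nnegrE ?enorm_ge0
           ?(le_trans (enorm_ge0 _) (hL x x')).
Qed.

Lemma lipschitz_young F L (e g : R) x x' v : lipschitz F L -> 0 < g ->
  2 * e * dotp (F x - F x') v
    <= L ^+ 2 * e ^+ 2 / g * dotp (x - x') (x - x') + g * dotp v v.
Proof.
move=> hL g_gt0; apply: le_trans (dotp_young e _ _ g_gt0) _; rewrite lerD2r.
have -> : L ^+ 2 * e ^+ 2 / g * dotp (x - x') (x - x')
          = e ^+ 2 / g * (L ^+ 2 * dotp (x - x') (x - x')) by ring.
rewrite ler_wpM2l ?lipschitz_dotp //.
by rewrite mulr_ge0 ?sqr_ge0 // invr_ge0 ltW.
Qed.

End InnerProduct.

Section GoldenRatio.
Variables (R : realType) (p : nat).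
Implicit Types (T : setop R p) (F : 'rV[R]_p -> 'rV[R]_p).

Lemma zer_Phi_graph F T z : in_zer_Phi F T z -> T z (- F z).
Proof. by case=> w [Tw /eqP]; rewrite addrC addr_eq0 => /eqP <-. Qed.

Lemma cyc3_monotone_resolvent T eta z1 x1 x2 w2 z3 x3 :
  cyc3_monotone T -> 0 <= eta ->
  resolvent_rel eta T z1 x1 -> T x2 w2 -> resolvent_rel eta T z3 x3 ->
  0 <= dotp (z1 - x1) (x1 - x2) + eta * dotp w2 (x2 - x3)
       + dotp (z3 - x3) (x3 - x1).
Proof.
move=> hT eta_ge0 [u1 [Tu1 ->]] Tw2 [u3 [Tu3 ->]].
rewrite [x1 + _ - _]addrAC [x3 + _ - _]addrAC !subrr !add0r !dotpZl -!mulrDr.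
by rewrite mulr_ge0 // hT.
Qed.

Lemma cyc3_forward_backward_step T F eta xp xk xn yp yk z :
  cyc3_monotone T -> 0 <= eta ->
  resolvent_rel eta T (yp - eta *: F xp) xk ->
  resolvent_rel eta T (yk - eta *: F xk) xn ->
  in_zer_Phi F T z ->
  eta * dotp (F xk - F z) (xk - z)
    <= dotp (yk - xn) (xn - z) + dotp (yp - xk) (xk - xn)
       + eta * dotp (F xk - F xp) (xk - xn).
Proof.
move=> hT eta_ge0 hk hn /zer_Phi_graph hz.
have := cyc3_monotone_resolvent hT eta_ge0 hn hz hk.
by rewrite -subr_ge0; congr (0 <= _); dotp_componentwise; ring.
Qed.

Lemma golden_ratio_identity (tau : R) (xk xn yp yk yn z : 'rV[R]_p) :
  tau != 0 ->
  yk = ((tau - 1) / tau) *: xk + tau^-1 *: yp ->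
  yn = ((tau - 1) / tau) *: xn + tau^-1 *: yk ->
  tau * dotp (yn - z) (yn - z)
  = tau * dotp (yk - z) (yk - z)
    - tau * (tau - 1) * dotp (xn - xk) (xn - xk)
    - (tau - 1) * (1 - tau ^+ 2 + tau) / tau * dotp (xn - yk) (xn - yk)
    - tau * (tau - 1) * dotp (xk - yk) (xk - yk)
    - 2 * (tau - 1) * (dotp (yk - xn) (xn - z) + dotp (yp - xk) (xk - xn)).
Proof. by move=> tau_neq0 -> ->; dotp_componentwise; field. Qed.

End GoldenRatio.

Theorem lemma9 (R : realType) (p : nat) (F : 'rV[R]_p -> 'rV[R]_p) (L : R)
  (T : setop R p) (tau eta : R) (x y : nat -> 'rV[R]_p) :
  lipschitz F L ->
  max_cyc3_monotone T ->
  (exists z, in_zer_Phi F T z) ->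
  1 < tau -> 0 < eta ->
  in_dom_Phi F T (x 0%N) ->
  y 0%N = ((tau - 1) / tau) *: x 0%N + tau^-1 *: x 0%N ->
  (forall k, y k.+1 = ((tau - 1) / tau) *: x k.+1 + tau^-1 *: y k) ->
  (forall k, resolvent_rel eta T (y k - eta *: F (x k)) (x k.+1)) ->
  forall (xstar : 'rV[R]_p) (gamma : R), in_zer_Phi F T xstar -> 0 < gamma ->
  forall k : nat, (1 <= k)%N ->
    tau * dotp (y k.+1 - xstar) (y k.+1 - xstar)
      + (tau - 1) * (tau - gamma) * dotp (x k.+1 - x k) (x k.+1 - x k)
    <= tau * dotp (y k - xstar) (y k - xstar)
       + (tau - 1) * L ^+ 2 * eta ^+ 2 / gamma * dotp (x k - x k.-1) (x k - x k.-1)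
       - (tau - 1) * (1 - tau ^+ 2 + tau) / tau * dotp (x k.+1 - y k) (x k.+1 - y k)
       - tau * (tau - 1) * dotp (x k - y k) (x k - y k)
       - 2 * eta * (tau - 1) * dotp (F (x k) - F xstar) (x k - xstar).
Proof.
(* After the case split, k is k - 1. *)
move=> hL [hT _] _ tau_gt1 eta_gt0 _ _ hy hres z gamma hz gamma_gt0 [//|k] _ /=.
have key := cyc3_forward_backward_step hT (ltW eta_gt0) (hres k) (hres k.+1) hz.
have cross := lipschitz_young eta (x k.+1) (x k) (x k.+1 - x k.+2) hL gamma_gt0.
rewrite [dotp (x k.+1 - x k.+2) _]dotp_distC in cross.
rewrite (golden_ratio_identity z (lt0r_neq0 (lt_trans ltr01 tau_gt1)) (hy k) (hy k.+1)).
have tau1_ge0 : 0 <= tau - 1 by rewrite subr_ge0 ltW.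
rewrite -subr_ge0 in key; rewrite -subr_ge0 in cross.
have := mulr_ge0 tau1_ge0 key; have := mulr_ge0 tau1_ge0 cross.
lra.
Qed.
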